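(* Let $R$ be a commutative ring with unit element, $X$ a set, $F\subseteq R\langle X\rangle$ and $f\in(F)$. Let $Q=(V,E,X,s,t,l)$ be a labelled quiver such that $f$ is compatible with $Q$ and all elements of $F$ are uniformly compatible with $Q$. Then, for every $R$-linear category $\mathcal{C}$ and every representation $\mathcal{R}=(\mathcal{V},\varphi)$ of $Q$ in $\mathcal{C}$ that is consistent with the labelling $l$ and such that every realization of every element of $F$ with respect to $\mathcal{R}$ is zero, every realization of $f$ with respect to $\mathcal{R}$ is zero.
   Context: $R\langle X\rangle$ is the free algebra of noncommutative polynomials over $R$ in indeterminates $X$, with monomials the words in $\langle X\rangle$ (including the empty word $1$); $\operatorname{supp}(f)$ is the set of monomials with nonzero coefficient; $(F)$ is the two-sided ideal generated by $F$. A labelled quiver $Q=(V,E,X,s,t,l)$ has vertices $V$, edges $E$, source/target maps $s,t:E\to V$ and labelling $l:E\to X$. A nonempty path $p=e_n\cdots e_1$ (with $s(e_{i+1})=t(e_i)$) has label $l(e_n)\cdots l(e_1)$, source $s(e_1)$, target $t(e_n)$; each vertex $v$ has an empty path with label $1$ and source and target $v$. For a monomial $m$, $\sigma(m)=\{(s(p),t(p)) : p \text{ a path with } l(p)=m\}$; for a polynomial $f$, $\sigma(f)=\bigcap_{m\in\operatorname{supp}(f)}\sigma(m)$ (so $\sigma(0)=V\times V$). $f$ is compatible with $Q$ if $\sigma(f)\neq\emptyset$, and uniformly compatible if it is compatible and all $m\in\operatorname{supp}(f)$ have the same set $\sigma(m)$. $R\langle X\rangle_{v,w}=\{f : (v,w)\in\sigma(f)\}$.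 A category $\mathcal{C}$ is $R$-linear if every $\operatorname{Hom}_{\mathcal{C}}(A,B)$ is an $R$-module and composition is $R$-bilinear. A representation $(\mathcal{V},\varphi)$ of $Q$ in $\mathcal{C}$ assigns to each vertex $v$ an object $\mathcal{V}_v$ and to each edge $e$ a morphism $\varphi(e)\in\operatorname{Hom}_{\mathcal{C}}(\mathcal{V}_{s(e)},\mathcal{V}_{t(e)})$; it is consistent with $l$ if for any two nonempty paths $e_n\cdots e_1$ and $d_n\cdots d_1$ with the same source and target and equal labels, $\varphi(e_n)\cdots\varphi(e_1)=\varphi(d_n)\cdots\varphi(d_1)$. For a consistent representation and $v,w\in V$, $\varphi_{v,w}:R\langle X\rangle_{v,w}\to\operatorname{Hom}_{\mathcal{C}}(\mathcal{V}_v,\mathcal{V}_w)$ is the $R$-linear map with $\varphi_{v,w}(l(e_n\cdots e_1))=\varphi(e_n)\cdots\varphi(e_1)$ for nonempty paths $e_n\cdots e_1$ from $v$ to $w$, and $\varphi_{v,v}(1)=1_{\mathcal{V}_v}$. For $f\in R\langle X\rangle_{v,w}$, $\varphi_{v,w}(f)$ is called a realization of $f$; the realizations of $f$ are all $\varphi_{v,w}(f)$ with $(v,w)\in\sigma(f)$. *)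

From HB Require Import structures.
From mathcomp Require Import all_boot all_order all_algebra.
From Stdlib Require Import ClassicalEpsilon.
Set Implicit Arguments. Unset Strict Implicit. Unset Printing Implicit Defensive.
Import GRing.Theory.
Local Open Scope ring_scope.

(* Monomials are words (seq X), the empty word being 1.  A polynomial is a
   coefficient function with finite support; [npsupp] lists the support
   exactly (without repetition). *)
Record ncpoly (R : pzRingType) (X : eqType) := NCPoly {
  npcoef : seq X -> R;
  npsupp : seq (seq X);
  npsupp_uniq : uniq npsupp;
  npsuppP : forall m, (npcoef m != 0) = (m \in npsupp) }.

Definition ncmul (R : pzRingType) (X : eqType) (a b : seq X -> R) : seq X -> R :=
  fun m => \sum_(i < (size m).+1) a (take i m) * b (drop i m).

Inductive in_ideal (R : pzRingType) (X : eqType) (F : ncpoly R X -> Prop)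
  : (seq X -> R) -> Prop :=
| ideal_gen g : F g -> in_ideal F (npcoef g)
| ideal_zero : in_ideal F (fun _ => 0)
| ideal_add a b : in_ideal F a -> in_ideal F b -> in_ideal F (fun m => a m + b m)
| ideal_mull (p : ncpoly R X) a : in_ideal F a -> in_ideal F (ncmul (npcoef p) a)
| ideal_mulr (p : ncpoly R X) a : in_ideal F a -> in_ideal F (ncmul a (npcoef p)).

Record quiver (X : Type) := Quiver {
  qV : Type; qE : Type; qsrc : qE -> qV; qtgt : qE -> qV; qlab : qE -> X }.

(* paths from v to w: pcons e p is the path e p (p followed by e) *)
Inductive qpath (X : Type) (Q : quiver X) : qV Q -> qV Q -> Type :=
| pnil (v : qV Q) : @qpath X Q v v
| pcons (v : qV Q) (e : qE Q) : @qpath X Q v (qsrc e) -> @qpath X Q v (qtgt e).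
Arguments qpath {X} Q _ _.
Arguments pnil {X Q} v.
Arguments pcons {X Q v} e _.

Fixpoint plabel (X : Type) (Q : quiver X) v w (p : qpath Q v w) : seq X :=
  match p with
  | pnil _ => [::]
  | pcons _ e p' => qlab e :: plabel p'
  end.

Definition pnonempty (X : Type) (Q : quiver X) v w (p : qpath Q v w) : bool :=
  if p is pnil _ then false else true.

Definition sigma_mon (X : Type) (Q : quiver X) (m : seq X) (v w : qV Q) : Prop :=
  exists p : qpath Q v w, plabel p = m.
Arguments sigma_mon {X} Q m v w.

(* sigma(f) = intersection over the support (sigma(0) = V x V) *)
Definition sigma_poly (R : pzRingType) (X : eqType) (Q : quiver X)
  (f : ncpoly R X) (v w : qV Q) : Prop :=
  forall m, m \in npsupp f -> sigma_mon Q m v w.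
Arguments sigma_poly {R X} Q f v w.

Definition compatible (R : pzRingType) (X : eqType) (Q : quiver X) (f : ncpoly R X) :=
  exists v w, sigma_poly Q f v w.
Arguments compatible {R X} Q f.

Definition uniformly_compatible (R : pzRingType) (X : eqType) (Q : quiver X)
  (f : ncpoly R X) :=
  compatible Q f /\
  forall m1 m2, m1 \in npsupp f -> m2 \in npsupp f ->
    forall v w, sigma_mon Q m1 v w <-> sigma_mon Q m2 v w.
Arguments uniformly_compatible {R X} Q f.

Record RlinCat (R : pzRingType) := RlinCatMk {
  cOb : Type;
  cHom : cOb -> cOb -> lmodType R;
  cid : forall A, cHom A A;
  ccomp : forall A B C, cHom B C -> cHom A B -> cHom A C;
  ccompA : forall A B C D (h : cHom C D) (g : cHom B C) (f : cHom A B),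
    ccomp h (ccomp g f) = ccomp (ccomp h g) f;
  ccomp1f : forall A B (f : cHom A B), ccomp (cid B) f = f;
  ccompf1 : forall A B (f : cHom A B), ccomp f (cid A) = f;
  ccomp_linl : forall A B C (a : R) (g1 g2 : cHom B C) (f : cHom A B),
    ccomp (a *: g1 + g2) f = a *: ccomp g1 f + ccomp g2 f;
  ccomp_linr : forall A B C (a : R) (g : cHom B C) (f1 f2 : cHom A B),
    ccomp g (a *: f1 + f2) = a *: ccomp g f1 + ccomp g f2 }.
Arguments cHom {R} r _ _ : rename.
Arguments cid {R} r A : rename.
Arguments ccomp {R r A B C} _ _ : rename.

Record representation (R : pzRingType) (X : Type) (Q : quiver X) (C : RlinCat R) :=
  Representation {
  rV : qV Q -> cOb C;
  rphi : forall e : qE Q, cHom C (rV (qsrc e)) (rV (qtgt e)) }.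

Fixpoint pmor (R : pzRingType) (X : Type) (Q : quiver X) (C : RlinCat R)
  (rep : representation Q C) v w (p : qpath Q v w) : cHom C (rV rep v) (rV rep w) :=
  match p in qpath _ v w return cHom C (rV rep v) (rV rep w) with
  | pnil u => cid C (rV rep u)
  | pcons _ e p' => ccomp (rphi rep e) (pmor rep p')
  end.

Definition consistent (R : pzRingType) (X : Type) (Q : quiver X) (C : RlinCat R)
  (rep : representation Q C) : Prop :=
  forall v w (p q : qpath Q v w), pnonempty p -> pnonempty q ->
    plabel p = plabel q -> pmor rep p = pmor rep q.

(* phi_{v,w}(m) for a monomial m with (v,w) in sigma(m): the composite along
   some (chosen) path from v to w labelled m; 0 if there is none (never used
   in that case). *)
Definition word_real (R : pzRingType) (X : Type) (Q : quiver X) (C : RlinCat R)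
  (rep : representation Q C) (v w : qV Q) (m : seq X) : cHom C (rV rep v) (rV rep w) :=
  match excluded_middle_informative (sigma_mon Q m v w) with
  | left H => pmor rep (proj1_sig (constructive_indefinite_description _ H))
  | right _ => 0
  end.

Definition realization (R : pzRingType) (X : eqType) (Q : quiver X) (C : RlinCat R)
  (rep : representation Q C) (f : ncpoly R X) (v w : qV Q) : cHom C (rV rep v) (rV rep w) :=
  \sum_(m <- npsupp f) npcoef f m *: word_real rep v w m.

From mathcomp Require Import all_boot all_order all_algebra.
From Stdlib Require Import ClassicalEpsilon.
Set Implicit Arguments. Unset Strict Implicit. Unset Printing Implicit Defensive.
Import GRing.Theory.
Local Open Scope ring_scope.

(* We prove more: every [a] in the ideal (F) vanishes in every context, i.e.
   sum_m a(m) phi(u m t) = 0 for all words u, t and all vertices v, w, where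
   phi(u m t) is the composite along any path from v to w labelled u m t, or 0
   if there is none.  For a generator g, uniform compatibility means that
   either no u m t (m in supp g) labels such a path, or all do; a path for
   u m t splits into paths for u, m and t, the m-part running between vertices
   x, y that do not depend on m, so by consistency the sum factors as
   phi(u) o phi_{x,y}(g) o phi(t) = 0.  The property is clearly stable under
   sums, and under multiplication by a polynomial on either side since the
   extra factor is absorbed into the context (on the right, commutativity of
   R moves its coefficient out).  The theorem is the case u = t = 1. *)

Section Paths.

Variables (X : Type) (Q : quiver X).

Fixpoint pcat y w (p : qpath Q y w) v : qpath Q v y -> qpath Q v w :=
  match p in qpath _ y w return qpath Q v y -> qpath Q v w with
  | pnil _ => fun q => q
  | pcons _ e p' => fun q => pcons e (pcat p' q)
  end.

Lemma plabel_cat y w (p : qpath Q y w) v (q : qpath Q v y) :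
  plabel (pcat p q) = plabel p ++ plabel q.
Proof. by elim: p q => //= u e p IHp q; rewrite IHp. Qed.

Lemma sigma_mon_cat s1 s2 v y w :
  sigma_mon Q s1 y w -> sigma_mon Q s2 v y -> sigma_mon Q (s1 ++ s2) v w.
Proof. by move=> [p <-] [q <-]; exists (pcat p q); rewrite plabel_cat. Qed.

Lemma sigma_mon_split s1 s2 v w :
  sigma_mon Q (s1 ++ s2) v w -> exists y, sigma_mon Q s1 y w /\ sigma_mon Q s2 v y.
Proof.
case=> p; elim: p s1 => [u|u e p IHp] [|x s1] //=.
- by move=> <-; exists u; split; [exists (pnil u) | exists (pnil u)].
- by move=> <-; exists (qtgt e); split; [exists (pnil (qtgt e)) | exists (pcons e p)].
- case=> <- /IHp [y [[p1 <-] s2vy]].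
  by exists y; split => //; exists (pcons e p1).
Qed.

Lemma plabel_nil_eq v w (p : qpath Q v w) : plabel p = [::] -> v = w.
Proof. by case: p. Qed.

Lemma plabel_nil_pnil v (p : qpath Q v v) : plabel p = [::] -> p = pnil v.
Proof.
suff: forall w (q : qpath Q v w), plabel q = [::] ->
    existT (qpath Q v) w q = existT (qpath Q v) v (pnil v).
  by move=> pnilE /pnilE; apply: inj_pair2.
by move=> w [].
Qed.

End Paths.

Section LinearCategory.

Variables (R : pzRingType) (C : RlinCat R).

Lemma ccomp0l A B D (f : cHom C A B) : ccomp (0 : cHom C B D) f = 0.
Proof.
have := ccomp_linl (-1) (0 : cHom C B D) 0 f.
by rewrite scaler0 addr0 scaleN1r addNr.
Qed.

Lemma ccomp0r A B D (g : cHom C B D) : ccomp g (0 : cHom C A B) = 0.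
Proof.
have := ccomp_linr (-1) g (0 : cHom C A B) 0.
by rewrite scaler0 addr0 scaleN1r addNr.
Qed.

Lemma ccomp_suml A B D (I : Type) (s : seq I) (c : I -> R)
    (g : I -> cHom C B D) (f : cHom C A B) :
  ccomp (\sum_(i <- s) c i *: g i) f = \sum_(i <- s) c i *: ccomp (g i) f.
Proof.
elim: s => [|i s IHs]; first by rewrite !big_nil ccomp0l.
by rewrite !big_cons ccomp_linl IHs.
Qed.

Lemma ccomp_sumr A B D (I : Type) (s : seq I) (c : I -> R)
    (g : cHom C B D) (f : I -> cHom C A B) :
  ccomp g (\sum_(i <- s) c i *: f i) = \sum_(i <- s) c i *: ccomp g (f i).
Proof.
elim: s => [|i s IHs]; first by rewrite !big_nil ccomp0r.
by rewrite !big_cons ccomp_linr IHs.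
Qed.

End LinearCategory.

Section PathRealization.

Variables (R : pzRingType) (X : Type) (Q : quiver X) (C : RlinCat R).
Variable rep : representation Q C.

Lemma pmor_cat y w (p : qpath Q y w) v (q : qpath Q v y) :
  pmor rep (pcat p q) = ccomp (pmor rep p) (pmor rep q).
Proof.
elim: p q => /= [u q|u e p IHp q]; first by rewrite ccomp1f.
by rewrite IHp ccompA.
Qed.

Lemma word_real_out v w m : ~ sigma_mon Q m v w -> word_real rep v w m = 0.
Proof. by rewrite /word_real; case: excluded_middle_informative. Qed.

Hypothesis rep_consistent : consistent rep.

(* Consistency is only assumed for nonempty paths; an empty label forces
   [v = w] and both paths to be [pnil v]. *)
Lemma pmor_plabel v w (p q : qpath Q v w) :
  plabel p = plabel q -> pmor rep p = pmor rep q.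
Proof.
case Ep: (plabel p) => [|x s] Eq.
- have Evw := plabel_nil_eq Ep; subst w.
  by rewrite (plabel_nil_pnil Ep) (plabel_nil_pnil (esym Eq)).
- apply: rep_consistent; last by rewrite Ep.
  + by case: p Ep {Eq}.
  + by case: q Eq.
Qed.

Lemma word_realE v w (p : qpath Q v w) : word_real rep v w (plabel p) = pmor rep p.
Proof.
rewrite /word_real; case: excluded_middle_informative => [H|[]]; last by exists p.
by case: (constructive_indefinite_description _ H) => q /= /pmor_plabel.
Qed.

Lemma word_real_cat s1 s2 v y w :
  sigma_mon Q s1 y w -> sigma_mon Q s2 v y ->
  word_real rep v w (s1 ++ s2) = ccomp (word_real rep y w s1) (word_real rep v y s2).
Proof. by move=> [p <-] [q <-]; rewrite -plabel_cat !word_realE pmor_cat. Qed.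

End PathRealization.

Lemma big_pred1_uniq (M : nmodType) (I : eqType) (s : seq I) d (F : I -> M) :
  uniq s -> \sum_(i <- s | i == d) F i = if d \in s then F d else 0.
Proof.
move=> s_uniq; case: ifP => [ds | dNs].
- by rewrite big_mkcond (bigD1_seq d) //= eqxx big1 ?addr0 // => i /negPf ->.
- by rewrite big1_seq // => i /andP[/eqP -> ds]; rewrite ds in dNs.
Qed.

Lemma notin_support_eq0 (M : nmodType) (I : eqType) (F : I -> M) (s : seq I) i :
  {subset support F <= s} -> i \notin s -> F i = 0.
Proof. by move=> Fs iNs; apply/eqP; apply: contraNT iNs; exact: (Fs i). Qed.

Lemma big_support_eq (M : nmodType) (I : eqType) (F : I -> M) s t :
  uniq s -> uniq t -> {subset support F <= s} -> {subset support F <= t} ->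
  \sum_(i <- s) F i = \sum_(i <- t) F i.
Proof.
move=> s_uniq t_uniq sFs sFt.
have sum_support r : \sum_(i <- r) F i = \sum_(i <- filter (mem (support F)) r) F i.
  rewrite big_filter [RHS]big_mkcond; apply: eq_bigr => i _.
  by case: ifPn => // /negPn /eqP.
rewrite sum_support [RHS]sum_support.
apply: perm_big; apply: uniq_perm; rewrite ?filter_uniq // => i.
by rewrite !mem_filter; apply: andb_id2l => /[dup] /sFs -> /sFt ->.
Qed.

Lemma big_scale_support_eq (R : pzRingType) (M : lmodType R) (I : eqType)
    (c : I -> R) (G : I -> M) s t :
  uniq s -> uniq t -> {subset support c <= s} -> {subset support c <= t} ->
  \sum_(i <- s) c i *: G i = \sum_(i <- t) c i *: G i.
Proof.
have sub r : {subset support c <= r} -> {subset support (fun i => c i *: G i) <= r}.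
  move=> scr i; rewrite inE => cG0; apply: scr; rewrite inE.
  by apply: contraNneq cG0 => ->; rewrite scale0r.
by move=> s_uniq t_uniq /sub scs /sub sct; apply: big_support_eq.
Qed.

Lemma support_npcoef (R : pzRingType) (X : eqType) (p : ncpoly R X) :
  {subset support (npcoef p) <= npsupp p}.
Proof. by move=> m; rewrite inE npsuppP. Qed.

Section Convolution.

Variables (R : pzRingType) (X : eqType) (p a : seq X -> R) (sp sa : seq (seq X)).
Hypotheses (sp_uniq : uniq sp) (sa_uniq : uniq sa).
Hypotheses (p_sp : {subset support p <= sp}) (a_sa : {subset support a <= sa}).

Lemma big_cat_eq x m :
  \sum_(y <- sa) (if m == x ++ y then p x * a y else 0) =
  if x == take (size x) m then p x * a (drop (size x) m) else 0.
Proof.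
rewrite -big_mkcond /=; case: ifP => [/eqP xm | xNm].
- have mE : m = x ++ drop (size x) m by rewrite {1}xm cat_take_drop.
  rewrite (eq_bigl (pred1 (drop (size x) m))); last first.
    by move=> y /=; rewrite {1}mE eqseq_cat // eqxx eq_sym.
  rewrite big_pred1_uniq //; case: ifP => // /negbT aNsa.
  by rewrite (notin_support_eq0 a_sa aNsa) mulr0.
- by rewrite big1 // => y /eqP mE; rewrite mE take_size_cat ?eqxx in xNm.
Qed.

(* Both sides enumerate the factorizations m = x ++ y: the left one by the cut
   position, the right one by the prefix x. *)
Lemma ncmul_prefixes m :
  ncmul p a m =
  \sum_(x <- sp) (if x == take (size x) m then p x * a (drop (size x) m) else 0).
Proof.
rewrite /ncmul (eq_bigr (fun i : 'I__ =>
  \sum_(x <- sp | x == take i m) p x * a (drop i m))); last first.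
  move=> i _; rewrite big_pred1_uniq //; case: ifP => // /negbT pNsp.
  by rewrite (notin_support_eq0 p_sp pNsp) mul0r.
under eq_bigr do rewrite big_mkcond.
rewrite exchange_big /=; apply: eq_bigr => x _; rewrite -big_mkcond /=.
case: ifP => [/eqP xm | xNm].
- have size_x : (size x < (size m).+1)%N by rewrite ltnS xm size_take_min geq_minr.
  rewrite (big_pred1 (Ordinal size_x)) // => i /=.
  apply/eqP/eqP => [x_take | -> //]; apply: val_inj => /=.
  by rewrite x_take size_takel // -ltnS.
- apply: big1 => i /eqP x_take; move: xNm.
  by rewrite x_take size_takel ?eqxx // -ltnS.
Qed.

Lemma ncmul_factorizations m :
  ncmul p a m = \sum_(x <- sp) \sum_(y <- sa) (if m == x ++ y then p x * a y else 0).
Proof. by rewrite ncmul_prefixes; apply: eq_bigr => x _; rewrite big_cat_eq. Qed.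

Lemma support_ncmul : {subset support (ncmul p a) <= [seq x ++ y | x <- sp, y <- sa]}.
Proof.
move=> m; rewrite inE; apply: contraR => mN; apply/eqP/big1 => i _.
case: (p (take i m) =P 0) => [-> | /eqP p_take]; first by rewrite mul0r.
case: (a (drop i m) =P 0) => [-> | /eqP a_drop]; first by rewrite mulr0.
case/negP: mN; rewrite -(cat_take_drop i m).
by apply: allpairs_f; [apply: p_sp | apply: a_sa]; rewrite inE.
Qed.

Lemma big_ncmul (M : lmodType R) (G : seq X -> M) S :
  uniq S -> {subset [seq x ++ y | x <- sp, y <- sa] <= S} ->
  \sum_(m <- S) ncmul p a m *: G m =
  \sum_(x <- sp) \sum_(y <- sa) (p x * a y) *: G (x ++ y).
Proof.
move=> S_uniq spsa_S.
under eq_bigr do rewrite ncmul_factorizations scaler_suml.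
rewrite exchange_big; apply: eq_big_seq => x xsp.
under eq_bigr do rewrite scaler_suml.
rewrite exchange_big; apply: eq_big_seq => y ysa.
rewrite (eq_bigr (fun m => if m == x ++ y then (p x * a y) *: G m else 0)).
  by rewrite -big_mkcond big_pred1_uniq // spsa_S ?allpairs_f.
by move=> m _; case: ifP; rewrite ?scale0r.
Qed.

End Convolution.

Section ContextVanishing.

Variables (R : comPzRingType) (X : eqType) (Q : quiver X) (C : RlinCat R).
Variable rep : representation Q C.
Hypothesis rep_consistent : consistent rep.

Definition vanishes_in_contexts (a : seq X -> R) :=
  exists s, [/\ uniq s, {subset support a <= s} &
    forall v w u t, \sum_(m <- s) a m *: word_real rep v w (u ++ m ++ t) = 0].

Lemma vanishes_generator (g : ncpoly R X) :
  uniformly_compatible Q g ->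
  (forall v w, sigma_poly Q g v w -> realization rep g v w = 0) ->
  vanishes_in_contexts (npcoef g).
Proof.
move=> [_ g_unif] g_real; exists (npsupp g); split => [||v w u t].
- exact: npsupp_uniq.
- exact: support_npcoef.
case: (classic (exists2 m0, m0 \in npsupp g & sigma_mon Q (u ++ m0 ++ t) v w)).
  case=> m0 m0g /sigma_mon_split[y [uyw /sigma_mon_split[x [m0xy tvx]]]].
  have gxy : sigma_poly Q g x y by move=> m mg; apply/(g_unif m0 m m0g mg).
  transitivity (ccomp (word_real rep y w u)
                  (ccomp (realization rep g x y) (word_real rep v x t))).
    rewrite /realization ccomp_suml ccomp_sumr; apply: eq_big_seq => m mg.
    have mxy := gxy m mg; have mtvy := sigma_mon_cat mxy tvx.
    rewrite (word_real_cat rep_consistent uyw mtvy).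
    by rewrite (word_real_cat rep_consistent mxy tvx).
  by rewrite g_real // ccomp0l ccomp0r.
move=> no_path; apply: big1_seq => m /andP[_ mg].
by rewrite word_real_out ?scaler0 // => umt; apply: no_path; exists m.
Qed.

Lemma vanishes0 : vanishes_in_contexts (fun _ => 0).
Proof. by exists [::]; split => // [m | v w u t]; rewrite ?inE ?eqxx ?big_nil. Qed.

Lemma vanishesD a b : vanishes_in_contexts a -> vanishes_in_contexts b ->
  vanishes_in_contexts (fun m => a m + b m).
Proof.
move=> [sa [sa_uniq a_sa a0]] [sb [sb_uniq b_sb b0]].
have s_uniq := undup_uniq (sa ++ sb).
have a_s : {subset support a <= undup (sa ++ sb)}.
  by move=> m /a_sa m_sa; rewrite mem_undup mem_cat m_sa.
have b_s : {subset support b <= undup (sa ++ sb)}.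
  by move=> m /b_sb m_sb; rewrite mem_undup mem_cat m_sb orbT.
exists (undup (sa ++ sb)); split => // [m | v w u t].
  rewrite inE; case: (a m =P 0) => [-> | /eqP am]; last by move=> _; apply: a_s.
  by rewrite add0r => bm; apply: b_s.
under eq_bigr do rewrite scalerDl.
rewrite big_split /= -(big_scale_support_eq _ sa_uniq s_uniq a_sa a_s).
by rewrite -(big_scale_support_eq _ sb_uniq s_uniq b_sb b_s) a0 b0 addr0.
Qed.

Lemma vanishes_mull (p : ncpoly R X) a :
  vanishes_in_contexts a -> vanishes_in_contexts (ncmul (npcoef p) a).
Proof.
move=> [sa [sa_uniq a_sa a0]].
have p_uniq := npsupp_uniq p; have p_sp := @support_npcoef _ _ p.
exists (undup [seq x ++ y | x <- npsupp p, y <- sa]); split => [||v w u t].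
- exact: undup_uniq.
- by move=> m /(support_ncmul p_sp a_sa); rewrite mem_undup.
rewrite (big_ncmul p_uniq sa_uniq p_sp a_sa) ?undup_uniq //; last first.
  by move=> m; rewrite mem_undup.
apply: big1 => x _; under eq_bigr do rewrite -scalerA -catA catA.
by rewrite -scaler_sumr a0 scaler0.
Qed.

Lemma vanishes_mulr (p : ncpoly R X) a :
  vanishes_in_contexts a -> vanishes_in_contexts (ncmul a (npcoef p)).
Proof.
move=> [sa [sa_uniq a_sa a0]].
have p_uniq := npsupp_uniq p; have p_sp := @support_npcoef _ _ p.
exists (undup [seq x ++ y | x <- sa, y <- npsupp p]); split => [||v w u t].
- exact: undup_uniq.
- by move=> m /(support_ncmul a_sa p_sp); rewrite mem_undup.
rewrite (big_ncmul sa_uniq p_uniq a_sa p_sp) ?undup_uniq //; last first.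
  by move=> m; rewrite mem_undup.
rewrite exchange_big; apply: big1 => y _.
under eq_bigr do rewrite mulrC -scalerA -catA.
by rewrite -scaler_sumr a0 scaler0.
Qed.

Lemma ideal_vanishes (F : ncpoly R X -> Prop) :
  (forall g, F g -> uniformly_compatible Q g) ->
  (forall g, F g -> forall v w, sigma_poly Q g v w -> realization rep g v w = 0) ->
  forall a, in_ideal F a -> vanishes_in_contexts a.
Proof.
move=> F_unif F_real a; elim=> {a}.
- by move=> g Fg; apply: vanishes_generator; [apply: F_unif | apply: F_real].
- exact: vanishes0.
- by move=> a b _ a0 _ b0; apply: vanishesD.
- by move=> p a _; apply: vanishes_mull.
- by move=> p a _; apply: vanishes_mulr.
Qed.

Lemma vanishes_realization (f : ncpoly R X) :
  vanishes_in_contexts (npcoef f) -> forall v w, realization rep f v w = 0.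
Proof.
move=> [s [s_uniq f_s f0]] v w; rewrite /realization.
rewrite (big_scale_support_eq _ (npsupp_uniq f) s_uniq (@support_npcoef _ _ f) f_s).
by have := f0 v w [::] [::]; under eq_bigr do rewrite /= cats0.
Qed.

End ContextVanishing.

Theorem theorem5p14 (R : comPzRingType) (X : eqType) (F : ncpoly R X -> Prop)
  (f : ncpoly R X) (Q : quiver X) :
  in_ideal F (npcoef f) ->
  compatible Q f ->
  (forall g, F g -> uniformly_compatible Q g) ->
  forall (C : RlinCat R) (rep : representation Q C),
    consistent rep ->
    (forall g, F g -> forall v w, sigma_poly Q g v w -> realization rep g v w = 0) ->
    forall v w, sigma_poly Q f v w -> realization rep f v w = 0.
Proof.
(* [realization] is defined at every pair (v, w). *)
move=> f_ideal _ F_unif C rep rep_consistent F_real v w _.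
apply: vanishes_realization.
exact: (ideal_vanishes rep_consistent F_unif F_real f_ideal).
Qed.
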